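(* Let $0\le\lambda<\gamma\le\delta$ and let $\mathfrak{f}=\mathfrak{s}+\overline{\mathfrak{t}}\in\mathcal{R}_H^0(\gamma,\delta,\lambda)$ with $\mathfrak{s}(z)=z+\sum_{m\ge2}a_mz^m$, $\mathfrak{t}(z)=\sum_{m\ge2}b_mz^m$. Then for every $m\ge2$: (i) $|a_m|+|b_m|\le\frac{4(\gamma-\lambda)}{m^2[2\gamma+(\delta-\gamma)(m-1)]}$; (ii) $\big||a_m|-|b_m|\big|\le\frac{4(\gamma-\lambda)}{m^2[2\gamma+(\delta-\gamma)(m-1)]}$; (iii) $|a_m|\le\frac{4(\gamma-\lambda)}{m^2[2\gamma+(\delta-\gamma)(m-1)]}$. All these results are sharp, with equality in each for the function $\mathfrak{f}(z)=z+\sum_{m\ge2}\frac{4(\gamma-\lambda)}{m^2[2\gamma+(\delta-\gamma)(m-1)]}z^m$.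
   Context: Let $\mathcal{U}=\{z\in\mathbb{C}:|z|<1\}$. $\mathcal{H}^0$ denotes the class of complex-valued harmonic functions $\mathfrak{f}=\mathfrak{s}+\overline{\mathfrak{t}}$ on $\mathcal{U}$, where $\mathfrak{s}(z)=z+\sum_{m\ge2}a_mz^m$ and $\mathfrak{t}(z)=\sum_{m\ge2}b_mz^m$ are analytic in $\mathcal{U}$. For real $0\le\lambda<\gamma\le\delta$, $\mathcal{R}_H^0(\gamma,\delta,\lambda)$ is the class of $\mathfrak{f}=\mathfrak{s}+\overline{\mathfrak{t}}\in\mathcal{H}^0$ such that for all $z\in\mathcal{U}$, $\mathrm{Re}\left[\gamma\mathfrak{s}'(z)+\delta z\mathfrak{s}''(z)+\frac{\delta-\gamma}{2}z^2\mathfrak{s}'''(z)-\lambda\right]>\left|\gamma\mathfrak{t}'(z)+\delta z\mathfrak{t}''(z)+\frac{\delta-\gamma}{2}z^2\mathfrak{t}'''(z)\right|$. *)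

From Stdlib Require Import Reals Lra.
From Coquelicot Require Import Coquelicot.
Open Scope R_scope.

Definition inU (z : C) : Prop := Cmod z < 1.

Definition has_series (a : nat -> C) (s : C -> C) : Prop :=
  forall z : C, inU z -> is_pseries (K := C_AbsRing) (V := C_NormedModule) a z (s z).

(* Normalization of H^0: s(z) = z + sum_{m>=2} a_m z^m, t(z) = sum_{m>=2} b_m z^m. *)
Definition H0_coeffs (a b : nat -> C) : Prop :=
  a 0%nat = 0%C /\ a 1%nat = 1%C /\ b 0%nat = 0%C /\ b 1%nat = 0%C.

Definition cderiv (f : C -> C) (z l : C) : Prop :=
  is_derive (K := C_AbsRing) (V := C_NormedModule) f z l.

(* The operator  g |-> gamma g' + delta z g'' + (delta-gamma)/2 z^2 g''',
   evaluated on given first, second and third derivatives. *)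
Definition Lop (gam del : R) (g1 g2 g3 : C) (z : C) : C :=
  (RtoC gam * g1 + RtoC del * z * g2 + RtoC ((del - gam) / 2) * (z * z) * g3)%C.

(* f = s + conj t belongs to R_H^0(gamma, delta, lambda)
   (the H^0 normalization is imposed separately, via has_series/H0_coeffs). *)
Definition in_RH0 (gam del lam : R) (s t : C -> C) : Prop :=
  exists s1 s2 s3 t1 t2 t3 : C -> C,
    (forall z, inU z ->
       cderiv s z (s1 z) /\ cderiv s1 z (s2 z) /\ cderiv s2 z (s3 z) /\
       cderiv t z (t1 z) /\ cderiv t1 z (t2 z) /\ cderiv t2 z (t3 z)) /\
    (forall z, inU z ->
       Re (Lop gam del (s1 z) (s2 z) (s3 z) z - RtoC lam)%C
       > Cmod (Lop gam del (t1 z) (t2 z) (t3 z) z)).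

Definition bnd (gam del lam : R) (m : nat) : R :=
  4 * (gam - lam) / (INR m ^ 2 * (2 * gam + (del - gam) * (INR m - 1))).

Definition extremal_coeffs (gam del lam : R) (m : nat) : C :=
  match m with
  | 0%nat => 0%C
  | 1%nat => 1%C
  | _ => RtoC (bnd gam del lam m)
  end.

From Stdlib Require Import Reals Lra Lia ClassicalEpsilon.
From Coquelicot Require Import Coquelicot.
Open Scope R_scope.

(* For |eps| = 1 put H = L s + eps L t, where
   L g = gam g' + del z g'' + (del - gam)/2 z^2 g'''.  On Taylor coefficients L
   sends a_m z^m to a_m m^2 [2 gam + (del - gam)(m - 1)]/2 z^(m-1); as a_1 = 1 and
   b_1 = 0, H(0) = gam, and the hypothesis gives Re H > lam on the disk.
   Caratheodory's inequality |p_k| <= 2 (Re p_0 - lam) for the Taylor coefficients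
   of such H bounds |a_m + eps b_m|, and choosing eps to align eps b_m with a_m
   bounds |a_m| + |b_m|, which implies the other two estimates.
   Caratheodory's inequality is proved without integrals: for a Taylor polynomial P
   of H and the N-th roots of unity w_j, N large, the average of
   2 (Re P(r w_j) - mu) w_j^(-k) is p_k r^k; if Re P >= mu on |z| = r, its modulus
   is at most the average of 2 (Re P(r w_j) - mu), which is 2 (Re p_0 - mu).  Then
   the degree grows and r -> 1.  Equality holds for the function with
   L s = gam + 2 (gam - lam) z / (1 - z), since Re (z / (1 - z)) > -1/2 on the disk. *)

(* The generic operations of Coquelicot's hierarchy, instantiated at [C], are only
   convertible to [Cplus], [Cmult], ...: [unfold_C_ops] exposes them, and
   [change_eq_C] retypes an equation between such terms as one in [C] for [ring]. *)
Ltac unfold_C_ops :=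
  unfold plus, opp, scal, mult, one, zero, minus; cbn -[INR Cpow];
  repeat match goal with |- context [pow_n ?x ?n] => change (pow_n x n) with (Cpow x n) end.

Ltac change_eq_C := match goal with |- ?x = ?y => change (x = y :> C) end.

Lemma sum_n_CS (u : nat -> C) (n : nat) : sum_n u (S n) = (sum_n u n + u (S n))%C.
Proof. exact (sum_Sn u n). Qed.

Lemma sum_n_Cplus (u v : nat -> C) (n : nat) :
  sum_n (fun k => u k + v k)%C n = (sum_n u n + sum_n v n)%C.
Proof. exact (sum_n_plus u v n). Qed.

Lemma sum_n_Cmult_l (c : C) (u : nat -> C) (n : nat) :
  sum_n (fun k => c * u k)%C n = (c * sum_n u n)%C.
Proof. exact (sum_n_mult_l c u n). Qed.

Lemma sum_n_Cmult_r (c : C) (u : nat -> C) (n : nat) :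
  sum_n (fun k => u k * c)%C n = (sum_n u n * c)%C.
Proof. exact (sum_n_mult_r c u n). Qed.

Lemma sum_n_Cconj (u : nat -> C) (n : nat) :
  Cconj (sum_n u n) = sum_n (fun k => Cconj (u k)) n.
Proof.
  induction n as [|n IH].
  - now rewrite !sum_O.
  - now rewrite !sum_n_CS, Cplus_conj, IH.
Qed.

Lemma Cmod_sum_n_le (u : nat -> C) (n : nat) :
  Cmod (sum_n u n) <= sum_n (fun k => Cmod (u k)) n.
Proof. exact (norm_sum_n_m u 0 n). Qed.

Lemma is_lim_seq_Cmod (u : nat -> C) (L : C) :
  filterlim u eventually (locally L) -> is_lim_seq (fun n => Cmod (u n)) (Cmod L).
Proof.
  intros HL.
  exact (filterlim_comp _ _ _ u (fun x : C_NormedModule => norm x) _ _ _ HL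
           (filterlim_norm (K := C_AbsRing) (V := C_NormedModule) L)).
Qed.

Lemma Cmod_series_le (u : nat -> C) (b : nat -> R) (L : C) (B : R) :
  is_series u L -> is_series b B -> (forall n, Cmod (u n) <= b n) -> Cmod L <= B.
Proof.
  intros HL HB Hub.
  assert (Hpartial : forall N, Cmod (sum_n u N) <= sum_n b N).
  { intros N. eapply Rle_trans; [apply Cmod_sum_n_le|]. now apply sum_n_m_le. }
  exact (is_lim_seq_le _ _ _ _ Hpartial (is_lim_seq_Cmod _ _ HL) (HB : is_lim_seq (sum_n b) B)).
Qed.

Lemma is_series_C_terms_bounded (u : nat -> C) (L : C) :
  is_series u L -> exists M, forall n, Cmod (u n) <= M.
Proof.
  intros HL.
  destruct (filterlim_bounded (K := C_AbsRing) (V := C_NormedModule) (sum_n u))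
    as [M HM]; [now exists L|].
  change (forall n, Cmod (sum_n u n) <= M) in HM.
  exists (2 * M). intros [|n].
  - assert (H0 := HM 0%nat). rewrite sum_O in H0.
    assert (0 <= Cmod (u 0%nat)) by apply Cmod_ge_0. lra.
  - replace (u (S n)) with (sum_n u (S n) - sum_n u n)%C
      by (rewrite sum_n_CS; ring).
    eapply Rle_trans; [apply Cmod_triangle|].
    rewrite Cmod_opp. assert (H1 := HM (S n)). assert (H2 := HM n). lra.
Qed.

Lemma CV_radius_Cmod_gt (a : nat -> C) (s : C -> C) :
  has_series a s -> forall rho, 0 <= rho < 1 -> Rbar_lt rho (CV_radius (fun n => Cmod (a n))).
Proof.
  intros Hs rho Hrho.
  set (x := (1 + rho) / 2).
  assert (Hx : inU (RtoC x)).
  { unfold inU. rewrite Cmod_R, Rabs_pos_eq; unfold x; lra. }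
  destruct (is_series_C_terms_bounded _ _ (Hs _ Hx)) as [M HM].
  assert (Hle : Rbar_le x (CV_radius (fun n => Cmod (a n)))).
  { apply (proj1 (CV_radius_bounded _)). exists M. intros n.
    specialize (HM n). unfold_C_ops.
    rewrite Cmod_mult, Cmod_pow, Cmod_R, Rabs_pos_eq in HM by (unfold x; lra).
    rewrite Rabs_pos_eq; [lra|].
    apply Rmult_le_pos; [apply Cmod_ge_0 | apply pow_le; unfold x; lra]. }
  eapply Rbar_lt_le_trans; [| exact Hle]. simpl. unfold x. lra.
Qed.

Lemma ex_series_nonneg_pseries (c : nat -> R) (rho : R) :
  0 <= rho -> (forall n, 0 <= c n) -> Rbar_lt rho (CV_radius c) ->
  ex_series (fun n => c n * rho ^ n).
Proof.
  intros Hrho Hc Hr.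
  apply ex_series_ext with (a := fun n => Rabs (c n * rho ^ n)).
  - intros n. apply Rabs_pos_eq, Rmult_le_pos; [apply Hc | now apply pow_le].
  - apply CV_disk_inside. now rewrite Rabs_pos_eq.
Qed.

(** * Termwise differentiation of complex power series *)

Definition CPS_derive (a : nat -> C) (n : nat) : C := (INR (S n) * a (S n))%C.

Lemma Cmod_CPS_derive (a : nat -> C) (n : nat) :
  Cmod (CPS_derive a n) = PS_derive (fun k => Cmod (a k)) n.
Proof.
  unfold CPS_derive, PS_derive.
  now rewrite Cmod_mult, Cmod_R, Rabs_pos_eq by apply pos_INR.
Qed.

Definition pow_remainder (w z : C) (n : nat) : C :=
  (w ^ S n - z ^ S n - INR (S n) * (w - z) * z ^ n)%C.

Lemma pow_remainder_S (w z : C) (n : nat) :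
  pow_remainder w z (S n) =
  (w * pow_remainder w z n + INR (S n) * ((w - z) * (w - z)) * z ^ n)%C.
Proof. unfold pow_remainder. rewrite (S_INR (S n)), RtoC_plus. simpl Cpow. ring. Qed.

Lemma Cmod_pow_remainder_le (w z : C) (rho : R) :
  Cmod w <= rho -> Cmod z <= rho ->
  forall m, Cmod (pow_remainder w z (S m)) <=
            Cmod (w - z) ^ 2 * (INR (S m) * INR (S (S m)) / 2) * rho ^ m.
Proof.
  intros Hw Hz.
  assert (Hrho : 0 <= rho) by (eapply Rle_trans; [apply Cmod_ge_0 | exact Hz]).
  assert (Hwz : 0 <= Cmod (w - z)) by apply Cmod_ge_0.
  induction m as [|m IH].
  - rewrite pow_remainder_S. unfold pow_remainder. simpl INR. simpl Cpow.
    match goal with |- Cmod ?X <= _ => replace X with ((w - z) * (w - z))%C by ring end.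
    rewrite Cmod_mult. simpl. lra.
  - rewrite pow_remainder_S.
    eapply Rle_trans; [apply Cmod_triangle|].
    rewrite !Cmod_mult, Cmod_R, Cmod_pow, Rabs_pos_eq by apply pos_INR.
    assert (H1 : Cmod w * Cmod (pow_remainder w z (S m)) <=
                 rho * (Cmod (w - z) ^ 2 * (INR (S m) * INR (S (S m)) / 2) * rho ^ m))
      by (apply Rmult_le_compat; auto using Cmod_ge_0).
    assert (H2 : Cmod z ^ S m <= rho ^ S m) by (apply pow_incr; split; auto using Cmod_ge_0).
    assert (H3 : 0 <= INR (S (S m)) * (Cmod (w - z) * Cmod (w - z)))
      by (apply Rmult_le_pos; [apply pos_INR | nra]).
    assert (H4 := Rmult_le_compat_l _ _ _ H3 H2).
    rewrite !S_INR in *. simpl pow in *. nra.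
Qed.

Lemma is_series_C_shift (u : nat -> C) (L : C) :
  is_series u L -> u 0%nat = 0%C -> is_series (fun k => u (S k)) L.
Proof.
  intros HL H0. apply is_series_incr_1.
  match goal with |- is_series _ ?X => replace X with L; [exact HL|] end.
  rewrite H0. unfold_C_ops. ring.
Qed.

Lemma ex_pseries_CPS_derive (a : nat -> C) (s : C -> C) :
  has_series a s -> forall z, inU z -> ex_pseries (CPS_derive a) z.
Proof.
  intros Hs z Hz.
  apply (ex_series_le (K := C_AbsRing) (V := C_CompleteNormedModule))
    with (b := fun n => PS_derive (fun k => Cmod (a k)) n * Cmod z ^ n).
  - intros n.
    change (Cmod (z ^ n * CPS_derive a n)%C <= PS_derive (fun k => Cmod (a k)) n * Cmod z ^ n).
    rewrite Cmod_mult, Cmod_pow, Cmod_CPS_derive. lra.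
  - apply ex_series_nonneg_pseries.
    + apply Cmod_ge_0.
    + intros n. rewrite <- Cmod_CPS_derive. apply Cmod_ge_0.
    + rewrite CV_radius_derive. apply (CV_radius_Cmod_gt a s Hs).
      split; [apply Cmod_ge_0 | exact Hz].
Qed.

Lemma is_series_pseries_remainder (a : nat -> C) (s : C -> C) (z w D : C) :
  has_series a s -> inU z -> inU w -> is_pseries (CPS_derive a) z D ->
  is_series (fun m => a (S (S m)) * pow_remainder w z (S m))%C (s w - s z - (w - z) * D)%C.
Proof.
  intros Hs Hz Hw HD.
  assert (Hdiff := is_series_minus _ _ _ _ (Hs w Hw) (Hs z Hz)).
  assert (HDz := is_series_scal_l (K := C_AbsRing) (V := C_NormedModule) (w - z)%C _ _ HD).
  apply is_series_C_shift in Hdiff; [| unfold_C_ops; ring].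
  assert (Hrem := is_series_minus _ _ _ _ Hdiff HDz).
  apply is_series_C_shift in Hrem;
    [| unfold CPS_derive; unfold_C_ops; simpl Cpow; simpl INR; ring].
  eapply is_series_ext; [|exact Hrem].
  intros m. unfold pow_remainder, CPS_derive. unfold_C_ops. simpl Cpow. ring.
Qed.

Lemma pseries_remainder_le (a : nat -> C) (s : C -> C) (z D : C) :
  has_series a s -> inU z -> is_pseries (CPS_derive a) z D ->
  exists K d, 0 <= K /\ 0 < d /\
    forall w, Cmod (w - z) < d -> Cmod (s w - s z - (w - z) * D)%C <= K * Cmod (w - z) ^ 2.
Proof.
  intros Hs Hz HD.
  assert (Hz1 : Cmod z < 1) by exact Hz.
  assert (Hz0 : 0 <= Cmod z) by apply Cmod_ge_0.
  set (rho := (1 + Cmod z) / 2).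
  assert (Hrho : 0 <= rho) by (unfold rho; lra).
  set (c := fun n => PS_derive (PS_derive (fun k => Cmod (a k))) n * rho ^ n).
  assert (Hex : ex_series c).
  { apply ex_series_nonneg_pseries; [exact Hrho | |].
    - intros n. unfold PS_derive. repeat apply Rmult_le_pos; auto using pos_INR, Cmod_ge_0.
    - rewrite !CV_radius_derive. apply (CV_radius_Cmod_gt a s Hs). unfold rho; lra. }
  exists (Rabs (Series c)), ((1 - Cmod z) / 2). split; [|split]; [apply Rabs_pos | lra |].
  intros w Hwz.
  assert (Hzr : Cmod z <= rho) by (unfold rho; lra).
  assert (Hwr : Cmod w <= rho).
  { replace w with (z + (w - z))%C by ring.
    eapply Rle_trans; [apply Cmod_triangle|]. unfold rho. lra. }
  assert (Hw : inU w) by (unfold inU, rho in *; lra).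
  apply Rle_trans with (Cmod (w - z) ^ 2 * Series c);
    [| rewrite Rmult_comm; apply Rmult_le_compat_r; [apply pow2_ge_0 | apply Rle_abs]].
  apply (Cmod_series_le _ (fun m => Cmod (w - z) ^ 2 * c m) _ _
           (is_series_pseries_remainder a s z w D Hs Hz Hw HD)).
  - apply (is_series_scal_l (K := R_AbsRing) (V := R_NormedModule)).
    now apply Series_correct.
  - intros m. rewrite Cmod_mult.
    eapply Rle_trans; [apply Rmult_le_compat_l;
      [apply Cmod_ge_0 | exact (Cmod_pow_remainder_le w z rho Hwr Hzr m)]|].
    unfold c, PS_derive.
    assert (0 <= Cmod (a (S (S m))) * Cmod (w - z) ^ 2 * (INR (S m) * INR (S (S m))) * rho ^ m).
    { assert (0 <= rho ^ m) by now apply pow_le.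
      assert (0 <= Cmod (w - z) ^ 2) by apply pow2_ge_0.
      assert (0 <= Cmod (a (S (S m)))) by apply Cmod_ge_0.
      assert (0 <= INR (S m) * INR (S (S m))) by (apply Rmult_le_pos; apply pos_INR).
      apply Rmult_le_pos; [apply Rmult_le_pos; [apply Rmult_le_pos|]|]; assumption. }
    nra.
Qed.

Lemma cderiv_of_remainder_le (f : C -> C) (z D : C) (K d : R) :
  0 <= K -> 0 < d ->
  (forall w, Cmod (w - z) < d -> Cmod (f w - f z - (w - z) * D)%C <= K * Cmod (w - z) ^ 2) ->
  cderiv f z D.
Proof.
  intros HK Hd Hrem. split; [apply is_linear_scal_l|].
  intros x Hx.
  apply (is_filter_lim_locally_unique (K := C_AbsRing) (V := AbsRing_NormedModule C_AbsRing))
    in Hx. subst x.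
  intros eps.
  assert (Heps : 0 < eps / (K + 1)) by (apply Rdiv_lt_0_compat; [apply cond_pos | lra]).
  assert (Hdelta : 0 < Rmin d (eps / (K + 1))) by (apply Rmin_case; lra).
  exists (mkposreal _ Hdelta). intros w Hw.
  change (Cmod (w - z) < Rmin d (eps / (K + 1))) in Hw.
  change (Cmod (f w - f z - (w - z) * D)%C <= eps * Cmod (w - z)).
  assert (Hwz : 0 <= Cmod (w - z)) by apply Cmod_ge_0.
  assert (HKw : K * Cmod (w - z) <= eps).
  { apply Rle_trans with (K * (eps / (K + 1))).
    - apply Rmult_le_compat_l; [lra|]. pose proof (Rmin_r d (eps / (K + 1))). lra.
    - replace (K * (eps / (K + 1))) with (eps - eps / (K + 1)) by (field; lra). lra. }
  eapply Rle_trans; [apply Hrem; pose proof (Rmin_l d (eps / (K + 1))); lra|].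
  simpl. nra.
Qed.

Lemma has_series_cderiv (a : nat -> C) (s : C -> C) (z : C) :
  has_series a s -> inU z -> exists D, is_pseries (CPS_derive a) z D /\ cderiv s z D.
Proof.
  intros Hs Hz.
  destruct (ex_pseries_CPS_derive a s Hs z Hz) as [D HD].
  exists D. split; [exact HD|].
  destruct (pseries_remainder_le a s z D Hs Hz HD) as (K & d & HK & Hd & Hrem).
  exact (cderiv_of_remainder_le s z D K d HK Hd Hrem).
Qed.

Lemma has_series_derive (a : nat -> C) (s s1 : C -> C) :
  has_series a s -> (forall z, inU z -> cderiv s z (s1 z)) -> has_series (CPS_derive a) s1.
Proof.
  intros Hs Hs1 z Hz.
  destruct (has_series_cderiv a s z Hs Hz) as [D [HD HsD]].
  replace (s1 z) with D; [exact HD|].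
  apply is_C_derive_unique in HsD.
  specialize (Hs1 z Hz). apply is_C_derive_unique in Hs1.
  congruence.
Qed.

(** * Averages over roots of unity *)

Lemma sum_n_C_zero (f : nat -> C) (M : nat) :
  (forall j, (j <= M)%nat -> f j = 0%C) -> sum_n f M = 0%C :> C.
Proof.
  intros Hf. rewrite (sum_n_ext_loc _ (fun _ => zero) M Hf).
  exact (sum_n_m_const_zero 0 M).
Qed.

Lemma sum_n_C_single (f : nat -> C) (M k : nat) :
  (k <= M)%nat -> (forall j, (j <= M)%nat -> j <> k -> f j = 0%C) -> sum_n f M = f k :> C.
Proof.
  induction M as [|M IH]; intros Hk Hf.
  - rewrite sum_O. now replace k with 0%nat by lia.
  - rewrite sum_n_CS. destruct (Nat.eq_dec k (S M)) as [->|Hne].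
    + rewrite sum_n_C_zero by (intros j Hj; apply Hf; lia). ring.
    + rewrite IH, (Hf (S M)) by (lia || (intros j Hj Hjk; apply Hf; lia)). ring.
Qed.

Lemma sum_n_Cgeom (q : C) (n : nat) :
  ((q - 1) * sum_n (fun j => q ^ j) n = q ^ S n - 1)%C.
Proof.
  induction n as [|n IH].
  - rewrite sum_O. simpl. ring.
  - rewrite sum_n_CS, Cmult_plus_distr_l, IH. simpl. ring.
Qed.

Lemma sum_n_root_of_unity (q : C) (n : nat) :
  (q ^ S n)%C = 1%C -> q <> 1%C -> sum_n (fun j => q ^ j)%C n = 0%C :> C.
Proof.
  intros Hq Hq1.
  assert (Hq1' : (q - 1)%C <> 0%C) by (intros E; apply Hq1, Ceq_minus, E).
  replace (sum_n (fun j => q ^ j)%C n) with (/ (q - 1) * ((q - 1) * sum_n (fun j => q ^ j) n))%C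
    by (field; exact Hq1').
  rewrite sum_n_Cgeom, Hq. ring.
Qed.

(* [unit_root n] is the primitive root of unity of order [n + 1], so that
   sums over [j <= n] run over all its powers. *)
Definition unit_root (n : nat) : C := (cos (2 * PI / INR (S n)), sin (2 * PI / INR (S n))).

Lemma unit_root_pow (n m : nat) :
  (unit_root n ^ m)%C = (cos (2 * PI * INR m / INR (S n)), sin (2 * PI * INR m / INR (S n))).
Proof.
  induction m as [|m IH].
  - simpl Cpow. change (INR 0) with 0.
    replace (2 * PI * 0 / INR (S n)) with 0 by (unfold Rdiv; ring).
    now rewrite cos_0, sin_0.
  - rewrite Cpow_S, IH. unfold unit_root.
    replace (2 * PI * INR (S m) / INR (S n))
      with (2 * PI / INR (S n) + 2 * PI * INR m / INR (S n))
      by (rewrite (S_INR m); unfold Rdiv; ring).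
    rewrite cos_plus, sin_plus. unfold Cmult. simpl. f_equal; ring.
Qed.

Lemma Cmod_unit_root_pow (n m : nat) : Cmod (unit_root n ^ m) = 1.
Proof.
  rewrite unit_root_pow. unfold Cmod. cbn [fst snd].
  pose proof (sin2_cos2 (2 * PI * INR m / INR (S n))) as H. unfold Rsqr in H.
  replace (_ ^ 2 + _ ^ 2) with 1 by nra. apply sqrt_1.
Qed.

Lemma unit_root_pow_order (n m : nat) : ((unit_root n ^ m) ^ S n)%C = 1%C.
Proof.
  rewrite <- Cpow_mult_r, Nat.mul_comm, Cpow_mult_r, unit_root_pow.
  replace (2 * PI * INR (S n) / INR (S n)) with (2 * PI) by (field; apply not_0_INR; lia).
  rewrite cos_2PI, sin_2PI, Cpow_1_l. reflexivity.
Qed.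

Lemma unit_root_pow_neq1 (n m : nat) : (0 < m <= n)%nat -> (unit_root n ^ m)%C <> 1%C.
Proof.
  intros Hm E. rewrite unit_root_pow in E.
  apply (f_equal fst) in E. cbn [fst] in E.
  assert (Hn : 0 < INR (S n)) by (apply lt_0_INR; lia).
  assert (Hm0 : 0 < INR m) by (apply lt_0_INR; lia).
  assert (Hmn : INR m < INR (S n)) by (apply lt_INR; lia).
  set (x := PI * INR m / INR (S n)).
  assert (Hx : 0 < x < PI).
  { pose proof PI_RGT_0. unfold x. split.
    - apply Rdiv_lt_0_compat; [apply Rmult_lt_0_compat|]; lra.
    - apply Rmult_lt_reg_r with (INR (S n)); [lra|].
      unfold Rdiv. rewrite Rmult_assoc, Rinv_l by lra. nra. }
  replace (2 * PI * INR m / INR (S n)) with (2 * x) in E by (unfold x, Rdiv; ring).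
  rewrite cos_2a_sin in E. change (fst (RtoC 1)) with 1 in E.
  pose proof (sin_gt_0 x (proj1 Hx) (proj2 Hx)). nra.
Qed.

Lemma unit_root_pow_inj (n i k : nat) :
  (i <= n)%nat -> (k <= n)%nat -> (unit_root n ^ i)%C = (unit_root n ^ k)%C -> i = k.
Proof.
  assert (Hsplit : forall i k, (i < k <= n)%nat -> (unit_root n ^ i)%C <> (unit_root n ^ k)%C).
  { intros i' k' Hik E.
    assert (Hw : (unit_root n ^ i')%C <> 0%C).
    { intros H0. pose proof (Cmod_unit_root_pow n i') as H1. rewrite H0, Cmod_0 in H1. lra. }
    apply (unit_root_pow_neq1 n (k' - i')); [lia|].
    replace (unit_root n ^ (k' - i'))%C
      with (unit_root n ^ (k' - i') * unit_root n ^ i' / unit_root n ^ i')%C by (field; exact Hw).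
    rewrite <- Cpow_add_r. replace (k' - i' + i')%nat with k' by lia.
    rewrite <- E. field. exact Hw. }
  intros Hi Hk E. destruct (Nat.lt_total i k) as [Hlt|[Heq|Hgt]]; auto.
  - exfalso. apply (Hsplit i k); [lia | exact E].
  - exfalso. apply (Hsplit k i); [lia | congruence].
Qed.

Lemma Cmod1_mul_conj (u : C) : Cmod u = 1 -> (u * Cconj u)%C = 1%C.
Proof. intros H. rewrite <- Cmod2_conj, H. simpl. f_equal. ring. Qed.

Lemma sum_n_RtoC (u : nat -> R) (n : nat) :
  sum_n (fun j => RtoC (u j)) n = RtoC (sum_n u n).
Proof.
  induction n as [|n IH].
  - now rewrite !sum_O.
  - rewrite sum_n_CS, sum_Sn, IH, RtoC_plus. reflexivity.
Qed.

Lemma sum_unit_root_orthogonal (n i k : nat) :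
  (i <= n)%nat -> (k <= n)%nat ->
  sum_n (fun j => (unit_root n ^ i) ^ j * Cconj ((unit_root n ^ k) ^ j))%C n =
  (if Nat.eq_dec i k then RtoC (INR (S n)) else 0%C) :> C.
Proof.
  intros Hi Hk. set (w := unit_root n).
  assert (Hwk : (w ^ k * Cconj (w ^ k))%C = 1%C) by apply Cmod1_mul_conj, Cmod_unit_root_pow.
  rewrite (sum_n_ext _ (fun j => (w ^ i * Cconj (w ^ k)) ^ j)%C)
    by (intros j; now rewrite Cpow_conj, <- Cpow_mult_l).
  destruct (Nat.eq_dec i k) as [<-|Hik].
  - rewrite Hwk, (sum_n_ext _ (fun _ => RtoC 1)) by (intros; apply Cpow_1_l).
    rewrite sum_n_RtoC, sum_n_const. f_equal. ring.
  - apply sum_n_root_of_unity.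
    + rewrite Cpow_mult_l, <- Cpow_conj. unfold w. rewrite !unit_root_pow_order.
      apply injective_projections; simpl; lra.
    + intros E. apply Hik, (unit_root_pow_inj n); auto. fold w.
      replace (w ^ i)%C with (w ^ i * Cconj (w ^ k) * w ^ k)%C by
        (rewrite <- Cmult_assoc, (Cmult_comm (Cconj _)), Hwk; ring).
      rewrite E. ring.
Qed.

Lemma sum_unit_root_pow_mul (n i k : nat) :
  (0 < i + k <= n)%nat ->
  sum_n (fun j => (unit_root n ^ i) ^ j * (unit_root n ^ k) ^ j)%C n = 0%C :> C.
Proof.
  intros Hik.
  rewrite (sum_n_ext _ (fun j => (unit_root n ^ (i + k)) ^ j)%C)
    by (intros j; now rewrite Cpow_add_r, Cpow_mult_l).
  apply sum_n_root_of_unity; [apply unit_root_pow_order | now apply unit_root_pow_neq1].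
Qed.

Definition poly_eval (p : nat -> C) (M : nat) (z : C) : C := sum_n (fun i => p i * z ^ i)%C M.

Lemma sum_n_poly_eval_exchange (p g : nat -> C) (q : C) (r : R) (n M : nat) :
  sum_n (fun j => poly_eval p M (r * q ^ j) * g j)%C n
  = sum_n (fun i => p i * r ^ i * sum_n (fun j => (q ^ i) ^ j * g j) n)%C M :> C.
Proof.
  unfold poly_eval.
  rewrite (sum_n_ext _ (fun j => sum_n (fun i => p i * (r * q ^ j) ^ i * g j)%C M))
    by (intros j; now rewrite sum_n_Cmult_r).
  rewrite sum_n_switch. apply sum_n_ext. intros i.
  rewrite <- sum_n_Cmult_l. apply sum_n_ext. intros j.
  change_eq_C. rewrite Cpow_mult_l, <- !Cpow_mult_r, Nat.mul_comm. ring.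
Qed.

Lemma sum_unit_root_poly_conj (p : nat -> C) (r : R) (n M k : nat) :
  (k <= M)%nat -> (M <= n)%nat ->
  sum_n (fun j => poly_eval p M (r * unit_root n ^ j) * Cconj ((unit_root n ^ k) ^ j))%C n
  = (INR (S n) * p k * r ^ k)%C :> C.
Proof.
  intros HkM HMn. rewrite sum_n_poly_eval_exchange.
  rewrite (sum_n_C_single _ M k HkM).
  - rewrite sum_unit_root_orthogonal by lia.
    destruct (Nat.eq_dec k k); [ring | contradiction].
  - intros i Hi Hik. rewrite sum_unit_root_orthogonal by lia.
    destruct (Nat.eq_dec i k); [contradiction | ring].
Qed.

Lemma sum_unit_root_poly_vanish (p : nat -> C) (r : R) (n M k : nat) :
  (1 <= k)%nat -> (M + k <= n)%nat ->
  sum_n (fun j => poly_eval p M (r * unit_root n ^ j) * (unit_root n ^ k) ^ j)%C n = 0%C :> C.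
Proof.
  intros Hk HMn. rewrite sum_n_poly_eval_exchange.
  apply sum_n_C_zero. intros i Hi.
  rewrite sum_unit_root_pow_mul by lia. ring.
Qed.

Lemma re_twice_sub (c : C) (mu : R) : RtoC (2 * (Re c - mu)) = (c + Cconj c + RtoC (- 2 * mu))%C.
Proof. destruct c as [x y]. apply injective_projections; simpl; ring. Qed.

Section UnitRootAverages.

Variables (p : nat -> C) (mu r : R) (M n : nat).

Let P (j : nat) : C := poly_eval p M (r * unit_root n ^ j).

Lemma sum_unit_root_poly :
  (M <= n)%nat -> sum_n P n = (INR (S n) * p 0%nat)%C :> C.
Proof.
  intros HMn.
  rewrite (sum_n_ext _ (fun j => P j * Cconj ((unit_root n ^ 0) ^ j))%C).
  - unfold P. rewrite sum_unit_root_poly_conj by lia. simpl. ring.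
  - intros j. simpl Cpow. rewrite Cpow_1_l. change_eq_C.
    destruct (P j) as [x y]. apply injective_projections; simpl; ring.
Qed.

Lemma sum_unit_root_re_poly_mean :
  (M <= n)%nat ->
  sum_n (fun j => 2 * (Re (P j) - mu)) n = 2 * INR (S n) * (Re (p 0%nat) - mu).
Proof.
  intros HMn. apply RtoC_inj. rewrite <- sum_n_RtoC.
  rewrite (sum_n_ext _ (fun j => P j + Cconj (P j) + RtoC (- 2 * mu))%C)
    by (intros j; apply re_twice_sub).
  rewrite !sum_n_Cplus, <- sum_n_Cconj, sum_n_RtoC, sum_n_const, sum_unit_root_poly by exact HMn.
  destruct (p 0%nat) as [x y]. apply injective_projections; simpl; ring.
Qed.

Lemma sum_unit_root_re_poly_coef (k : nat) :
  (1 <= k <= M)%nat -> (M + k <= n)%nat ->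
  sum_n (fun j => RtoC (2 * (Re (P j) - mu)) * Cconj ((unit_root n ^ k) ^ j))%C n
  = (INR (S n) * p k * r ^ k)%C :> C.
Proof.
  intros Hk HMn.
  rewrite (sum_n_ext _ (fun j => P j * Cconj ((unit_root n ^ k) ^ j)
                               + Cconj (P j * (unit_root n ^ k) ^ j)
                               + RtoC (- 2 * mu) * Cconj ((unit_root n ^ k) ^ j))%C)
    by (intros j; rewrite re_twice_sub, Cmult_conj; change_eq_C; ring).
  rewrite !sum_n_Cplus, <- sum_n_Cconj, sum_n_Cmult_l, <- sum_n_Cconj.
  unfold P. rewrite sum_unit_root_poly_conj, sum_unit_root_poly_vanish by lia.
  rewrite sum_n_root_of_unity by (apply unit_root_pow_order || (apply unit_root_pow_neq1; lia)).
  apply injective_projections; simpl; ring.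
Qed.

End UnitRootAverages.

Lemma Cmod_coef_le_of_re_poly_ge (p : nat -> C) (mu r : R) (M k : nat) :
  0 <= r -> (1 <= k <= M)%nat ->
  (forall z, Cmod z = r -> mu <= Re (poly_eval p M z)) ->
  Cmod (p k) * r ^ k <= 2 * (Re (p 0%nat) - mu).
Proof.
  intros Hr Hk Hre. set (n := (M + k)%nat).
  set (v := fun j => 2 * (Re (poly_eval p M (r * unit_root n ^ j)) - mu)).
  assert (Hv : forall j, 0 <= v j).
  { intros j. enough (mu <= Re (poly_eval p M (r * unit_root n ^ j))) by (unfold v; lra).
    apply Hre. rewrite Cmod_mult, Cmod_R, Cmod_unit_root_pow, Rabs_pos_eq by exact Hr. ring. }
  assert (Hbound := Cmod_sum_n_le (fun j => RtoC (v j) * Cconj ((unit_root n ^ k) ^ j))%C n).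
  unfold v in Hbound at 1.
  rewrite sum_unit_root_re_poly_coef in Hbound by lia.
  rewrite (sum_n_ext _ v) in Hbound.
  2:{ intros j. rewrite Cmod_mult, Cmod_conj, <- Cpow_mult_r, Cmod_unit_root_pow, Cmod_R.
      rewrite Rabs_pos_eq by apply Hv. apply Rmult_1_r. }
  unfold v in Hbound. rewrite sum_unit_root_re_poly_mean in Hbound by lia.
  rewrite !Cmod_mult, Cmod_pow, !Cmod_R, !Rabs_pos_eq in Hbound by (apply pos_INR || exact Hr).
  assert (Hn : 0 < INR (S n)) by (apply lt_0_INR; lia).
  apply Rmult_le_reg_l with (INR (S n)); [exact Hn|]. lra.
Qed.

(** * Caratheodory's coefficient inequality *)

Lemma Cmod_pseries_sub_poly_le (p : nat -> C) (z l : C) (L : R) (M : nat) :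
  is_pseries p z l -> is_series (fun n => Cmod (p n) * Cmod z ^ n) L ->
  Cmod (l - poly_eval p M z) <= L - sum_n (fun n => Cmod (p n) * Cmod z ^ n) M.
Proof.
  intros Hl HS.
  assert (Hpoly : sum_n (fun n => scal (pow_n z n) (p n)) M = poly_eval p M z).
  { apply sum_n_ext. intros n. unfold_C_ops. apply Cmult_comm. }
  apply (Cmod_series_le (fun k => scal (pow_n z (S M + k)) (p (S M + k)%nat))
                        (fun k => Cmod (p (S M + k)%nat) * Cmod z ^ (S M + k))).
  - apply (is_series_incr_n (fun n => scal (pow_n z n) (p n)) (S M)); [lia|].
    simpl pred.
    match goal with |- is_series _ ?X => replace X with l; [exact Hl|] end.
    rewrite <- Hpoly. unfold_C_ops. ring.
  - apply (is_series_incr_n (fun n => Cmod (p n) * Cmod z ^ n) (S M)); [lia|].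
    simpl pred. match goal with |- is_series _ ?X => replace X with L; [exact HS|] end.
    unfold_C_ops. ring.
  - intros k.
    change (Cmod (z ^ (S M + k) * p (S M + k)%nat)%C
            <= Cmod (p (S M + k)%nat) * Cmod z ^ (S M + k)).
    rewrite Cmod_mult, Cmod_pow. lra.
Qed.

Lemma caratheodory_coef_le_radius (p : nat -> C) (H : C -> C) (lam r : R) (k : nat) :
  has_series p H -> (forall z, inU z -> lam < Re (H z)) -> (1 <= k)%nat -> 0 <= r < 1 ->
  Cmod (p k) * r ^ k <= 2 * (Re (p 0%nat) - lam).
Proof.
  intros Hp Hre Hk Hr.
  set (c := fun n => Cmod (p n) * r ^ n).
  assert (Hc : ex_series c)
    by (apply ex_series_nonneg_pseries;
        [lra | intros; apply Cmod_ge_0 | now apply (CV_radius_Cmod_gt p H)]).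
  destruct Hc as [L HL].
  apply Rle_plus_epsilon. intros eps Heps.
  assert (Htail : exists M, (k <= M)%nat /\ L - sum_n c M <= eps / 2).
  { assert (Hlim := proj2 (is_lim_seq_spec _ _) (HL : is_lim_seq (sum_n c) L)).
    destruct (Hlim (mkposreal (eps / 2) ltac:(lra))) as [N HN].
    exists (N + k)%nat. split; [lia|].
    specialize (HN (N + k)%nat ltac:(lia)). simpl in HN.
    apply Rabs_lt_between in HN. lra. }
  destruct Htail as (M & HkM & HM).
  enough (Cmod (p k) * r ^ k <= 2 * (Re (p 0%nat) - (lam - (L - sum_n c M)))) by lra.
  apply (Cmod_coef_le_of_re_poly_ge p _ r M k); [lra | lia |].
  intros z Hz.
  assert (HzU : inU z) by (unfold inU; lra).
  assert (Hsub := Cmod_pseries_sub_poly_le p z (H z) L M (Hp z HzU)).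
  rewrite Hz in Hsub. specialize (Hsub HL).
  pose proof (re_le_Cmod (H z - poly_eval p M z)%C) as Hre_le.
  unfold Cminus in Hre_le. rewrite re_plus, re_opp in Hre_le.
  specialize (Hre z HzU). fold c in Hsub. unfold Cminus in Hsub.
  apply Rabs_le_between in Hre_le. lra.
Qed.

Lemma bernoulli_pow_ge (r : R) (k : nat) : 0 <= r <= 1 -> 1 - INR k * (1 - r) <= r ^ k.
Proof.
  intros Hr. induction k as [|k IH].
  - simpl. lra.
  - rewrite S_INR. simpl pow.
    assert (0 <= INR k) by apply pos_INR.
    assert (r * (1 - INR k * (1 - r)) <= r * r ^ k) by (apply Rmult_le_compat_l; lra).
    assert (0 <= INR k * ((1 - r) * (1 - r))) by (apply Rmult_le_pos; nra).
    nra.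
Qed.

Lemma le_of_forall_mul_pow_le (X Y : R) (k : nat) :
  0 <= X -> (forall r, 0 <= r < 1 -> X * r ^ k <= Y) -> X <= Y.
Proof.
  intros HX Hle. apply Rle_plus_epsilon. intros eps Heps.
  assert (Hk : 0 <= INR k) by apply pos_INR.
  set (D := eps + X * INR k + 1).
  assert (HD : 0 < D) by (unfold D; nra).
  set (r := (X * INR k + 1) / D).
  assert (H1r : 1 - r = eps / D) by (unfold r; unfold D in *; field; lra).
  assert (Hr : 0 <= r < 1).
  { split; [apply Rdiv_le_0_compat; nra|].
    enough (0 < eps / D) by lra. now apply Rdiv_lt_0_compat. }
  assert (Hlin : X * INR k * (1 - r) <= eps).
  { rewrite H1r. apply Rmult_le_reg_r with D; [exact HD|].
    replace (X * INR k * (eps / D) * D) with (eps * (X * INR k)) by (field; lra).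
    unfold D. nra. }
  assert (X * (1 - INR k * (1 - r)) <= X * r ^ k)
    by (apply Rmult_le_compat_l; [exact HX | apply bernoulli_pow_ge; lra]).
  specialize (Hle r Hr). lra.
Qed.

Lemma caratheodory_coef_le (p : nat -> C) (H : C -> C) (lam : R) (k : nat) :
  has_series p H -> (forall z, inU z -> lam < Re (H z)) -> (1 <= k)%nat ->
  Cmod (p k) <= 2 * (Re (p 0%nat) - lam).
Proof.
  intros Hp Hre Hk. apply (le_of_forall_mul_pow_le _ _ k (Cmod_ge_0 _)).
  intros r Hr. exact (caratheodory_coef_le_radius p H lam r k Hp Hre Hk Hr).
Qed.

(** * The operator L on Taylor coefficients and the coefficient bounds *)

Definition Lop_weight (gam del : R) (n : nat) : R :=
  INR (S n) * (gam + del * INR n + (del - gam) / 2 * INR n * (INR n - 1)).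

Definition Lop_coef (gam del : R) (a : nat -> C) (n : nat) : C :=
  (Lop_weight gam del n * a (S n))%C.

Lemma is_pseries_Lop (gam del : R) (a : nat -> C) (z l1 l2 l3 : C) :
  is_pseries (CPS_derive a) z l1 ->
  is_pseries (CPS_derive (CPS_derive a)) z l2 ->
  is_pseries (CPS_derive (CPS_derive (CPS_derive a))) z l3 ->
  is_pseries (Lop_coef gam del a) z (Lop gam del l1 l2 l3 z).
Proof.
  intros H1 H2 H3.
  assert (Hz : forall c : C, mult z c = mult c z) by (intros; apply Cmult_comm).
  assert (G1 := is_pseries_scal (RtoC gam) _ _ _ (Hz _) H1).
  assert (G2 := is_pseries_scal (RtoC del) _ _ _ (Hz _) (is_pseries_incr_1 _ _ _ H2)).
  assert (G3 := is_pseries_scal (RtoC ((del - gam) / 2)) _ _ _ (Hz _)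
                  (is_pseries_incr_1 _ _ _ (is_pseries_incr_1 _ _ _ H3))).
  assert (G := is_pseries_plus _ _ _ _ _ (is_pseries_plus _ _ _ _ _ G1 G2) G3).
  match type of G with is_pseries _ _ ?X =>
    replace (Lop gam del l1 l2 l3 z) with X by (unfold Lop; unfold_C_ops; ring) end.
  eapply is_pseries_ext; [|exact G].
  intros n. unfold PS_plus, PS_scal, PS_incr_1, Lop_coef, Lop_weight, CPS_derive.
  destruct n as [|[|n]]; unfold_C_ops; rewrite ?S_INR; change_eq_C;
    apply injective_projections; simpl; ring.
Qed.

Lemma Lop_weight_eq (gam del : R) (n : nat) :
  Lop_weight gam del n = INR (S n) ^ 2 * (2 * gam + (del - gam) * (INR (S n) - 1)) / 2.
Proof. unfold Lop_weight. rewrite S_INR. field. Qed.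

Lemma Lop_weight_pos (gam del : R) (n : nat) : 0 < gam -> gam <= del -> 0 < Lop_weight gam del n.
Proof.
  intros Hg Hgd. rewrite Lop_weight_eq, S_INR.
  assert (0 <= INR n) by apply pos_INR.
  apply Rdiv_lt_0_compat; [apply Rmult_lt_0_compat; [apply pow_lt|]|]; nra.
Qed.

Lemma bnd_Lop_weight (gam del lam : R) (n : nat) :
  0 < gam -> gam <= del -> bnd gam del lam (S n) = 2 * (gam - lam) / Lop_weight gam del n.
Proof.
  intros Hg Hgd. pose proof (Lop_weight_pos gam del n Hg Hgd) as Hw.
  rewrite Lop_weight_eq in *. unfold bnd.
  set (D := INR (S n) ^ 2 * (2 * gam + (del - gam) * (INR (S n) - 1))) in *.
  field. lra.
Qed.

Lemma has_series_Lop (gam del : R) (a : nat -> C) (s s1 s2 s3 : C -> C) :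
  has_series a s ->
  (forall z, inU z -> cderiv s z (s1 z) /\ cderiv s1 z (s2 z) /\ cderiv s2 z (s3 z)) ->
  has_series (Lop_coef gam del a) (fun z => Lop gam del (s1 z) (s2 z) (s3 z) z).
Proof.
  intros Ha Hd.
  assert (Ha1 := has_series_derive a s s1 Ha (fun z hz => proj1 (Hd z hz))).
  assert (Ha2 := has_series_derive _ s1 s2 Ha1 (fun z hz => proj1 (proj2 (Hd z hz)))).
  assert (Ha3 := has_series_derive _ s2 s3 Ha2 (fun z hz => proj2 (proj2 (Hd z hz)))).
  intros z hz. apply is_pseries_Lop; auto.
Qed.

Lemma in_RH0_Lop_series (gam del lam : R) (a b : nat -> C) (s t : C -> C) :
  has_series a s -> has_series b t -> in_RH0 gam del lam s t ->
  exists Ls Lt : C -> C,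
    has_series (Lop_coef gam del a) Ls /\ has_series (Lop_coef gam del b) Lt /\
    forall z, inU z -> Cmod (Lt z) < Re (Ls z) - lam.
Proof.
  intros Ha Hb (s1 & s2 & s3 & t1 & t2 & t3 & Hd & Hpos).
  exists (fun z => Lop gam del (s1 z) (s2 z) (s3 z) z),
    (fun z => Lop gam del (t1 z) (t2 z) (t3 z) z).
  split; [|split].
  - apply (has_series_Lop gam del a s). exact Ha.
    intros z hz. destruct (Hd z hz) as (? & ? & ? & _). auto.
  - apply (has_series_Lop gam del b t). exact Hb.
    intros z hz. destruct (Hd z hz) as (_ & _ & _ & ? & ? & ?). auto.
  - intros z hz. specialize (Hpos z hz).
    unfold Cminus in Hpos. rewrite re_plus, re_opp, re_RtoC in Hpos. lra.
Qed.

Lemma in_RH0_coef_bound (gam del lam : R) (a b : nat -> C) (s t : C -> C) (eps : C) :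
  0 < gam -> gam <= del -> H0_coeffs a b -> has_series a s -> has_series b t ->
  in_RH0 gam del lam s t -> Cmod eps = 1 ->
  forall m, (2 <= m)%nat -> Cmod (a m + eps * b m) <= bnd gam del lam m.
Proof.
  intros Hg Hgd (_ & Ha1 & _ & Hb1) Ha Hb HR Heps m Hm.
  destruct (in_RH0_Lop_series gam del lam a b s t Ha Hb HR) as (Ls & Lt & HLs & HLt & Hpos).
  set (p := PS_plus (Lop_coef gam del a) (PS_scal eps (Lop_coef gam del b))).
  assert (Hp : has_series p (fun z => Ls z + eps * Lt z)%C).
  { intros z hz.
    exact (is_pseries_plus _ _ _ _ _ (HLs z hz)
             (is_pseries_scal eps _ _ _ (Cmult_comm _ _) (HLt z hz))). }
  assert (Hre : forall z, inU z -> lam < Re (Ls z + eps * Lt z)%C).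
  { intros z hz. specialize (Hpos z hz). rewrite re_plus.
    pose proof (re_le_Cmod (eps * Lt z)%C) as Hle.
    rewrite Cmod_mult, Heps, Rmult_1_l in Hle. apply Rabs_le_between in Hle. lra. }
  destruct m as [|n]; [lia|].
  assert (HC := caratheodory_coef_le p _ lam n Hp Hre ltac:(lia)).
  assert (Hp0 : p 0%nat = RtoC gam).
  { unfold p, PS_plus, PS_scal, Lop_coef, Lop_weight. rewrite Ha1, Hb1. unfold_C_ops.
    apply injective_projections; simpl; ring. }
  assert (Hpn : p n = (Lop_weight gam del n * (a (S n) + eps * b (S n)))%C)
    by (unfold p, PS_plus, PS_scal, Lop_coef; unfold_C_ops; ring).
  pose proof (Lop_weight_pos gam del n Hg Hgd) as Hw.
  rewrite Hp0, re_RtoC, Hpn, Cmod_mult, Cmod_R, Rabs_pos_eq in HC by lra.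
  rewrite bnd_Lop_weight by assumption.
  apply Rmult_le_reg_l with (Lop_weight gam del n); [exact Hw|].
  replace (Lop_weight gam del n * (2 * (gam - lam) / Lop_weight gam del n))
    with (2 * (gam - lam)) by (field; lra).
  exact HC.
Qed.

Lemma exists_unimodular_Cmod_add (a b : C) :
  exists eps, Cmod eps = 1 /\ Cmod (a + eps * b)%C = Cmod a + Cmod b.
Proof.
  destruct (Ceq_dec a 0) as [->|Ha]; [|destruct (Ceq_dec b 0) as [->|Hb]].
  - exists 1%C. rewrite Cmod_1, Cmult_1_l, Cplus_0_l, Cmod_0. split; ring.
  - exists 1%C. rewrite Cmod_1, Cmult_0_r, Cplus_0_r, Cmod_0. split; ring.
  - assert (Ha' : 0 < Cmod a) by now apply Cmod_gt_0.
    assert (Hb' : 0 < Cmod b) by now apply Cmod_gt_0.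
    exists (a / b * RtoC (Cmod b / Cmod a))%C. split.
    + rewrite Cmod_mult, Cmod_div, Cmod_R, Rabs_pos_eq
        by (auto; apply Rlt_le, Rdiv_lt_0_compat; lra).
      field. lra.
    + replace (a + a / b * RtoC (Cmod b / Cmod a) * b)%C with (a * RtoC (1 + Cmod b / Cmod a))%C
        by (rewrite RtoC_plus; field; exact Hb).
      rewrite Cmod_mult, Cmod_R, Rabs_pos_eq.
      * field. lra.
      * assert (0 < Cmod b / Cmod a) by (apply Rdiv_lt_0_compat; lra). lra.
Qed.

Lemma in_RH0_coef_bounds (gam del lam : R) (a b : nat -> C) (s t : C -> C) :
  0 < gam -> gam <= del -> H0_coeffs a b -> has_series a s -> has_series b t ->
  in_RH0 gam del lam s t ->
  forall m, (2 <= m)%nat ->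
    Cmod (a m) + Cmod (b m) <= bnd gam del lam m /\
    Rabs (Cmod (a m) - Cmod (b m)) <= bnd gam del lam m /\
    Cmod (a m) <= bnd gam del lam m.
Proof.
  intros Hg Hgd H0 Ha Hb HR m Hm.
  destruct (exists_unimodular_Cmod_add (a m) (b m)) as (eps & Heps & Hadd).
  pose proof (in_RH0_coef_bound gam del lam a b s t eps Hg Hgd H0 Ha Hb HR Heps m Hm) as Hbnd.
  rewrite Hadd in Hbnd.
  pose proof (Cmod_ge_0 (a m)). pose proof (Cmod_ge_0 (b m)).
  split; [|split]; [lra | apply Rabs_le; lra | lra].
Qed.

(** * The extremal function *)

Lemma one_sub_neq0 (z : C) : Cmod z < 1 -> (1 - z)%C <> 0%C.
Proof.
  intros Hz E. apply Ceq_minus in E. rewrite <- E, Cmod_1 in Hz. lra.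
Qed.

Lemma is_series_Cgeom (z : C) : Cmod z < 1 -> is_series (fun n => z ^ n)%C (/ (1 - z))%C.
Proof.
  intros Hz. pose proof (one_sub_neq0 z Hz) as Hz1.
  assert (Hm : 0 < Cmod (1 - z)) by now apply Cmod_gt_0.
  apply filterlim_locally. intros eps.
  assert (Hgeom := is_lim_seq_geom (Cmod z)
                     ltac:(rewrite Rabs_pos_eq by apply Cmod_ge_0; exact Hz)).
  apply is_lim_seq_spec in Hgeom.
  destruct (Hgeom (mkposreal (eps * Cmod (1 - z)) ltac:(pose proof (cond_pos eps); simpl; nra)))
    as [N HN].
  exists N. intros n Hn. apply (norm_compat1 (K := C_AbsRing) (V := C_NormedModule)).
  change (Cmod (sum_n (fun k => z ^ k)%C n - / (1 - z)) < eps).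
  assert (Hz2 : (z - 1)%C <> 0%C) by (intros E; apply Hz1; rewrite <- Copp_minus_distr, E; ring).
  replace (sum_n (fun k => z ^ k)%C n - / (1 - z))%C with (- z ^ S n / (1 - z))%C.
  2:{ replace (sum_n (fun k => z ^ k)%C n) with ((z ^ S n - 1) / (z - 1))%C
        by (rewrite <- sum_n_Cgeom; field; exact Hz2).
      field. auto. }
  unfold Cdiv. rewrite Cmod_mult, Cmod_opp, Cmod_inv, Cmod_pow by exact Hz1.
  specialize (HN (S n) ltac:(lia)). simpl in HN.
  rewrite Rminus_0_r, Rabs_pos_eq in HN by (apply (pow_le _ (S n)), Cmod_ge_0).
  apply Rmult_lt_reg_r with (Cmod (1 - z)); [exact Hm|].
  rewrite Rmult_assoc, Rinv_l by lra. simpl. lra.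
Qed.

Lemma re_div_one_sub_gt (z : C) : Cmod z < 1 -> -1/2 < Re (z / (1 - z))%C.
Proof.
  intros Hz. pose proof (one_sub_neq0 z Hz) as Hz1.
  set (w := (z / (1 - z))%C).
  assert (Hw : w = (z * (1 + w))%C) by (unfold w; field; exact Hz1).
  assert (H1w : 0 < Cmod (1 + w)).
  { apply Cmod_gt_0. intros E. rewrite E, Cmult_0_r in Hw.
    rewrite Hw, Cplus_0_r in E. apply C1_nz, E. }
  assert (Hlt : Cmod w < Cmod (1 + w)).
  { rewrite Hw at 1. rewrite Cmod_mult. pose proof (Cmod_ge_0 z). nra. }
  destruct w as [u v]. unfold Cmod in Hlt. simpl in Hlt.
  apply sqrt_lt_0_alt in Hlt. simpl. nra.
Qed.

Definition pseries_sum (a : nat -> C) (z : C) : C :=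
  epsilon (inhabits (RtoC 0)) (fun l : C => is_pseries a z l).

Lemma is_pseries_C_unique (a : nat -> C) (z l1 l2 : C) :
  is_pseries a z l1 -> is_pseries a z l2 -> l1 = l2.
Proof. exact (filterlim_locally_unique (K := C_AbsRing) (V := C_NormedModule) _ _ _). Qed.

Lemma has_series_pseries_sum (a : nat -> C) :
  (forall z, inU z -> ex_pseries a z) -> has_series a (pseries_sum a).
Proof. intros Hex z Hz. unfold pseries_sum. apply epsilon_spec, Hex, Hz. Qed.

Lemma pseries_sum_cderiv (a : nat -> C) :
  has_series a (pseries_sum a) ->
  has_series (CPS_derive a) (pseries_sum (CPS_derive a)) /\
  forall z, inU z -> cderiv (pseries_sum a) z (pseries_sum (CPS_derive a) z).
Proof.
  intros Ha.
  assert (Hd : has_series (CPS_derive a) (pseries_sum (CPS_derive a)))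
    by exact (has_series_pseries_sum _ (ex_pseries_CPS_derive a _ Ha)).
  split; [exact Hd|].
  intros z Hz. destruct (has_series_cderiv a _ z Ha Hz) as (D & HD & Hder).
  replace (pseries_sum (CPS_derive a) z) with D; [exact Hder|].
  exact (is_pseries_C_unique _ z _ _ HD (Hd z Hz)).
Qed.

Section Extremal.

Variables gam del lam : R.
Hypotheses (Hlam : 0 <= lam) (Hlg : lam < gam) (Hgd : gam <= del).

Let e := extremal_coeffs gam del lam.

Lemma bnd_range (m : nat) : (2 <= m)%nat -> 0 <= bnd gam del lam m <= 1.
Proof.
  intros Hm. destruct m as [|n]; [lia|].
  assert (Hn : 1 <= INR n) by (apply (le_INR 1); lia).
  assert (Hw : 4 * gam <= Lop_weight gam del n).
  { rewrite Lop_weight_eq, S_INR. assert (4 <= (INR n + 1) ^ 2) by nra.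
    assert (2 * gam <= 2 * gam + (del - gam) * (INR n + 1 - 1)) by nra. nra. }
  rewrite bnd_Lop_weight by lra.
  split.
  - apply Rdiv_le_0_compat; lra.
  - apply Rmult_le_reg_r with (Lop_weight gam del n); [lra|].
    unfold Rdiv. rewrite Rmult_assoc, Rinv_l, Rmult_1_r, Rmult_1_l by lra. lra.
Qed.

Lemma Cmod_extremal_coeffs (m : nat) : (2 <= m)%nat -> Cmod (e m) = bnd gam del lam m.
Proof.
  intros Hm. destruct m as [|[|m]]; [lia | lia|].
  unfold e. simpl. rewrite Cmod_R. apply Rabs_pos_eq, bnd_range. exact Hm.
Qed.

Lemma has_series_extremal : has_series e (pseries_sum e).
Proof.
  apply has_series_pseries_sum. intros z Hz.
  apply (ex_series_le (K := C_AbsRing) (V := C_CompleteNormedModule))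
    with (b := fun n => Cmod z ^ n).
  - intros n. change (Cmod (z ^ n * e n)%C <= Cmod z ^ n).
    rewrite Cmod_mult, Cmod_pow.
    assert (He : Cmod (e n) <= 1).
    { destruct n as [|[|n]]; unfold e; simpl.
      - rewrite Cmod_0. lra.
      - rewrite Cmod_1. lra.
      - rewrite Cmod_R, Rabs_pos_eq; apply bnd_range; lia. }
    pose proof (pow_le _ n (Cmod_ge_0 z)). pose proof (Cmod_ge_0 (e n)). nra.
  - apply ex_series_geom. rewrite Rabs_pos_eq by apply Cmod_ge_0. exact Hz.
Qed.

Lemma Lop_coef_extremal (n : nat) :
  Lop_coef gam del e n = match n with O => RtoC gam | S _ => RtoC (2 * (gam - lam)) end.
Proof.
  unfold Lop_coef, e. destruct n as [|n].
  - rewrite Cmult_1_r. f_equal. unfold Lop_weight. simpl. ring.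
  - change (extremal_coeffs gam del lam (S (S n))) with (RtoC (bnd gam del lam (S (S n)))).
    rewrite <- RtoC_mult, bnd_Lop_weight by lra. f_equal.
    pose proof (Lop_weight_pos gam del (S n) ltac:(lra) Hgd). field. lra.
Qed.

Lemma is_pseries_Lop_extremal (z : C) :
  Cmod z < 1 ->
  is_pseries (Lop_coef gam del e) z (RtoC gam + RtoC (2 * (gam - lam)) * (z / (1 - z)))%C.
Proof.
  intros Hz. pose proof (one_sub_neq0 z Hz) as Hz1.
  apply is_series_decr_1.
  assert (G := is_series_scal_l (K := C_AbsRing) (V := C_NormedModule)
                 (RtoC (2 * (gam - lam)) * z)%C _ _ (is_series_Cgeom z Hz)).
  match goal with |- is_series _ ?X =>
    replace X with (scal (RtoC (2 * (gam - lam)) * z)%C (/ (1 - z))%C) end.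
  - eapply is_series_ext; [|exact G].
    intros n. rewrite Lop_coef_extremal. unfold_C_ops. ring.
  - rewrite Lop_coef_extremal. unfold_C_ops. field. exact Hz1.
Qed.

Lemma extremal_in_RH0 : in_RH0 gam del lam (pseries_sum e) (fun _ => 0%C).
Proof.
  destruct (pseries_sum_cderiv e has_series_extremal) as [H1 D1].
  destruct (pseries_sum_cderiv _ H1) as [H2 D2].
  destruct (pseries_sum_cderiv _ H2) as [H3 D3].
  exists (pseries_sum (CPS_derive e)), (pseries_sum (CPS_derive (CPS_derive e))),
    (pseries_sum (CPS_derive (CPS_derive (CPS_derive e)))),
    (fun _ => 0%C), (fun _ => 0%C), (fun _ => 0%C).
  split.
  - intros z hz.
    assert (Hc : cderiv (fun _ : C => 0%C) z 0%C)
      by exact (is_derive_const (K := C_AbsRing) (V := C_NormedModule) (RtoC 0) z).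
    refine (conj _ (conj _ (conj _ (conj _ (conj _ _))))); auto.
  - intros z hz.
    rewrite (is_pseries_C_unique _ z _ _
               (is_pseries_Lop gam del e z _ _ _ (H1 z hz) (H2 z hz) (H3 z hz))
               (is_pseries_Lop_extremal z hz)).
    replace (Lop gam del 0 0 0 z) with (RtoC 0) by (unfold Lop; ring).
    pose proof (re_div_one_sub_gt z hz).
    rewrite Cmod_0. unfold Cminus in *. rewrite !re_plus, re_opp, !re_RtoC, re_scal_l. nra.
Qed.

End Extremal.

Theorem theorem7 (gam del lam : R) :
  0 <= lam -> lam < gam -> gam <= del ->
  (forall (a b : nat -> C) (s t : C -> C),
     H0_coeffs a b -> has_series a s -> has_series b t ->
     in_RH0 gam del lam s t ->
     forall m : nat, (2 <= m)%nat ->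
       Cmod (a m) + Cmod (b m) <= bnd gam del lam m /\
       Rabs (Cmod (a m) - Cmod (b m)) <= bnd gam del lam m /\
       Cmod (a m) <= bnd gam del lam m)
  /\
  (exists s : C -> C,
     has_series (extremal_coeffs gam del lam) s /\
     in_RH0 gam del lam s (fun _ => 0%C) /\
     forall m : nat, (2 <= m)%nat ->
       Cmod (extremal_coeffs gam del lam m) + Cmod 0%C = bnd gam del lam m /\
       Rabs (Cmod (extremal_coeffs gam del lam m) - Cmod 0%C) = bnd gam del lam m /\
       Cmod (extremal_coeffs gam del lam m) = bnd gam del lam m).
Proof.
  intros Hlam Hlg Hgd. split.
  - intros a b s t H0 Ha Hb HR.
    exact (in_RH0_coef_bounds gam del lam a b s t ltac:(lra) Hgd H0 Ha Hb HR).
  - exists (pseries_sum (extremal_coeffs gam del lam)).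
    split; [exact (has_series_extremal gam del lam Hlam Hlg Hgd)|].
    split; [exact (extremal_in_RH0 gam del lam Hlam Hlg Hgd)|].
    intros m Hm.
    rewrite (Cmod_extremal_coeffs gam del lam Hlam Hlg Hgd m Hm), Cmod_0, Rplus_0_r, Rminus_0_r.
    rewrite Rabs_pos_eq by apply (bnd_range gam del lam Hlam Hlg Hgd m Hm).
    auto.
Qed.
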